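(* Let $k\ge1$ and work in $\mathbb{R}^{2k}$ with standard basis $e_1,\dots,e_{2k}$. Define polytopes \[ P_{2\ell}=\mathrm{Conv}\{0,\ \ell e_2,\ell e_4,\dots,\ell e_{2k},\ 2\ell e_1,2\ell e_3,\dots,2\ell e_{2k-1}\},\quad \ell\ge1, \] \[ P_{i}=\mathrm{Conv}\{0,\ \tfrac{i-1}{2} e_2,\dots,\tfrac{i-1}{2} e_{2k},\ i e_1,i e_3,\dots,i e_{2k-1}\},\quad i\ge1 \text{ odd}, \] and line segments $Q_{2\ell-1}=\mathrm{Conv}\{0,(2\ell-1)e_{2\ell-1}\}$, $Q_{2\ell}=\mathrm{Conv}\{0,\ell e_{2\ell}\}$ for $\ell\in[k]$. For every nonzero $w\in\mathbb{R}^{2k}$, the set \[ \mathcal I_w=\{i\in[2k]:\ Q_i\cap \mathrm{Init}_w(P_i)\neq\emptyset\} \] is nonempty.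
   Context: For $w\in\mathbb{R}^n$ and a convex polytope $P\subset\mathbb{R}^n$, $\mathrm{Init}_w(P)=\{x\in P:\langle w,x\rangle\le\langle w,y\rangle \text{ for all } y\in P\}$ is the face of $P$ on which the linear functional $x\mapsto\langle w,x\rangle$ attains its minimum. (The polytopes $P_i$ are the Newton polytopes, in the variable order $(\mu_1,s_1,\dots,\mu_k,s_k)$, of the $i$-th moment equation $\sum_\ell\bar\lambda_\ell M_i(\mu_\ell,s_\ell)-\bar m_i$ of a $k$-component univariate Gaussian mixture with known weights.) *)

From HB Require Import structures.
From mathcomp Require Import all_boot all_order all_algebra.
From mathcomp Require Import reals.
Set Implicit Arguments. Unset Strict Implicit. Unset Printing Implicit Defensive.
Import Order.TTheory GRing.Theory Num.Theory.
Local Open Scope ring_scope.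

Section Defs.
Variable R : realType.

(* standard basis vector: unitv j = e_{j+1} (ordinals are 0-based) *)
Definition unitv n (j : 'I_n) : 'rV[R]_n := \row_(m < n) (m == j)%:R.

Definition dotv n (w x : 'rV[R]_n) : R := \sum_(j < n) w 0 j * x 0 j.

Definition conv n (S : seq 'rV[R]_n) (x : 'rV[R]_n) : Prop :=
  exists lam : 'I_(size S) -> R,
    [/\ forall j, 0 <= lam j, \sum_(j < size S) lam j = 1
      & x = \sum_(j < size S) lam j *: S`_j].

Definition Init n (w : 'rV[R]_n) (P : 'rV[R]_n -> Prop) (x : 'rV[R]_n) : Prop :=
  P x /\ forall y, P y -> dotv w x <= dotv w y.

(* Vertex sets. For a (1-based) index i, e_{2m} is unitv at the odd 0-based
   ordinal 2m-1, and e_{2m-1} is unitv at the even 0-based ordinal 2m-2. *)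
Definition Ppts (k i : nat) : seq 'rV[R]_(2 * k) :=
  let c := if odd i then ((i.-1) %/ 2)%N else (i %/ 2)%N in
  0 :: [seq c%:R *: unitv j | j <- [seq j : 'I_(2 * k) <- enum 'I_(2 * k) | odd j]]
    ++ [seq i%:R *: unitv j | j <- [seq j : 'I_(2 * k) <- enum 'I_(2 * k) | ~~ odd j]].

Definition Ppol (k i : nat) : 'rV[R]_(2 * k) -> Prop := conv (Ppts k i).

(* Q_i for i in [2k], given by its 0-based ordinal j (i = j+1):
   Q_{2l-1} = Conv{0, (2l-1) e_{2l-1}},  Q_{2l} = Conv{0, l e_{2l}} *)
Definition Qseg (k : nat) (j : 'I_(2 * k)) : 'rV[R]_(2 * k) -> Prop :=
  let i := j.+1 in
  conv [:: 0; (if odd i then i%:R else (i %/ 2)%N%:R) *: unitv j].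

End Defs.

From HB Require Import structures.
From mathcomp Require Import all_boot all_order all_algebra.
From mathcomp Require Import reals.
From mathcomp Require Import zify ring lra.
Import Order.TTheory GRing.Theory Num.Theory.
Local Open Scope ring_scope.

(* Every P_i is the convex hull of finitely many points, and a
   point of such a generating set minimising w over the set lies in
   Init_w(conv S).  The value of w at the vertices of P_i is 0, c * w_m at the
   "even" vertices c e_{2l} (c = floor(i/2)) and i * w_m at the "odd" vertices
   i e_{2l-1}.  Let a (resp. b) be a coordinate of minimal weight among the
   odd-numbered (resp. even-numbered) coordinates e_{2l-1} (resp. e_{2l}).
   - If w >= 0, the origin lies in Q_i and in Init_w(P_i), for every i.
   - If w_b < 0 and w_b <= 2 w_a, the endpoint of Q_b is a minimising vertex
     of P_b.
   - If w_a < 0 and 2 w_a <= w_b, the endpoint of Q_a is a minimising vertex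
     of P_a.
   These cases cover all w (nonzero or not), which proves the theorem. *)

Section ConvexHulls.
Variable R : realType.

Lemma dotv_sum n (w : 'rV[R]_n) m (lam : 'I_m -> R) (S : 'I_m -> 'rV[R]_n) :
  dotv w (\sum_(j < m) lam j *: S j) = \sum_(j < m) lam j * dotv w (S j).
Proof.
rewrite /dotv.
under eq_bigr => i _ do rewrite summxE big_distrr /=.
rewrite exchange_big /=; apply: eq_bigr => j _.
rewrite big_distrr /=; apply: eq_bigr => i _; rewrite mxE; ring.
Qed.

Lemma dotv_scale_unitv n (w : 'rV[R]_n) (s : R) (j : 'I_n) :
  dotv w (s *: unitv R j) = s * w 0 j.
Proof.
rewrite /dotv (bigD1 j) //= big1 ?addr0; first by rewrite !mxE eqxx mulr1 mulrC.
by move=> i /negbTE Hi; rewrite !mxE Hi mulr0 mulr0.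
Qed.

Lemma dotv0 n (w : 'rV[R]_n) : dotv w 0 = 0.
Proof. by rewrite /dotv big1 // => i _; rewrite mxE mulr0. Qed.

Lemma conv_mem n (S : seq 'rV[R]_n) x : x \in S -> conv S x.
Proof.
move=> xS; have xS' : (index x S < size S)%N by rewrite index_mem.
pose j0 := Ordinal xS'.
exists (fun j : 'I_(size S) => (j == j0)%:R); split.
- by move=> j; rewrite ler0n.
- by rewrite (bigD1 j0) //= eqxx big1 ?addr0 // => j /negbTE ->.
- rewrite (bigD1 j0) //= eqxx scale1r nth_index // big1 ?addr0 //.
  by move=> j /negbTE ->; rewrite scale0r.
Qed.

Lemma Init_conv_of_min n (w : 'rV[R]_n) (S : seq 'rV[R]_n) x : x \in S ->
  (forall p, p \in S -> dotv w x <= dotv w p) -> Init w (conv S) x.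
Proof.
move=> xS xmin; split; first exact: conv_mem.
move=> _ [lam [lam_ge0 lam_sum1 ->]]; rewrite dotv_sum.
apply: (@le_trans _ _ (\sum_(j < size S) lam j * dotv w x)).
  by rewrite -big_distrl /= lam_sum1 mul1r.
by apply: ler_sum => j _; rewrite ler_wpM2l // xmin // mem_nth.
Qed.

Lemma exists_argmin (I : finType) (P : pred I) (f : I -> R) i0 : P i0 ->
  exists2 a, P a & forall m, P m -> f a <= f m.
Proof. by move=> Pi0; case: (arg_minP f Pi0) => a Pa amin; exists a. Qed.

End ConvexHulls.

Section Vertices.
Variables (R : realType) (k : nat).
Implicit Types (w : 'rV[R]_(2 * k)) (i : nat).

Lemma Ppts_coef i :
  (if odd i then (i.-1 %/ 2)%N else (i %/ 2)%N) = i./2.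
Proof.
rewrite -divn2; case: ifP => // odd_i.
by have := modn2 i; rewrite odd_i; lia.
Qed.

Lemma Ppts0 i : 0 \in Ppts R k i.
Proof. by rewrite inE eqxx. Qed.

Lemma Ppts_odd_unit i (m : 'I_(2 * k)) : odd m ->
  (i./2)%:R *: unitv R m \in Ppts R k i.
Proof.
move=> odd_m; rewrite /Ppts Ppts_coef inE mem_cat; apply/orP; right.
by apply/orP; left; apply: map_f; rewrite mem_filter odd_m mem_enum.
Qed.

Lemma Ppts_even_unit i (m : 'I_(2 * k)) : ~~ odd m ->
  i%:R *: unitv R m \in Ppts R k i.
Proof.
move=> even_m; rewrite /Ppts inE mem_cat; apply/orP; right.
by apply/orP; right; apply: map_f; rewrite mem_filter even_m mem_enum.
Qed.

Lemma Init_Ppol_of_min i w x : x \in Ppts R k i ->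
  dotv w x <= 0 ->
  (forall m : 'I_(2 * k), odd m -> dotv w x <= (i./2)%:R * w 0 m) ->
  (forall m : 'I_(2 * k), ~~ odd m -> dotv w x <= i%:R * w 0 m) ->
  Init w (@Ppol R k i) x.
Proof.
move=> xP le_0 le_odd le_even; apply: Init_conv_of_min => // p.
rewrite /Ppts Ppts_coef inE mem_cat => /orP[/eqP->|/orP[/mapP[m]|/mapP[m]]].
- by rewrite dotv0.
- by rewrite mem_filter => /andP[odd_m _] ->; rewrite dotv_scale_unitv le_odd.
- by rewrite mem_filter => /andP[even_m _] ->; rewrite dotv_scale_unitv le_even.
Qed.

(* Membership of index j (i.e. i = j+1) in the set I_w of the paper. *)
Definition in_Iw w (j : 'I_(2 * k)) : Prop :=
  exists x, Qseg j x /\ Init w (@Ppol R k j.+1) x.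

Lemma nonneg_in_Iw w (j : 'I_(2 * k)) :
  (forall m, 0 <= w 0 m) -> in_Iw w j.
Proof.
move=> w_ge0; exists 0; split; first by apply: conv_mem; rewrite inE eqxx.
by apply: Init_Ppol_of_min; rewrite ?Ppts0 ?dotv0 // => m _; rewrite mulr_ge0.
Qed.

Lemma odd_min_in_Iw w (b : 'I_(2 * k)) : odd b -> w 0 b < 0 ->
  (forall m : 'I_(2 * k), odd m -> w 0 b <= w 0 m) ->
  (forall m : 'I_(2 * k), ~~ odd m -> w 0 b <= 2 * w 0 m) ->
  in_Iw w b.
Proof.
move=> odd_b wb_lt0 b_min_odd b_min_even.
have i_double : b.+1 = (b.+1./2 * 2)%N by rewrite muln2 even_halfK //= odd_b.
exists (b.+1./2%:R *: unitv R b); split.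
  by apply: conv_mem; rewrite /= odd_b divn2 !inE eqxx orbT.
apply: Init_Ppol_of_min; rewrite ?Ppts_odd_unit ?dotv_scale_unitv //.
- by rewrite mulr_ge0_le0 // ltW.
- by move=> m odd_m; rewrite ler_wpM2l // b_min_odd.
- move=> m even_m; have := b_min_even m even_m.
  rewrite [in b.+1%:R]i_double natrM -mulrA (mulrC 2) => le_wb.
  by rewrite ler_wpM2l.
Qed.

Lemma even_min_in_Iw w (a : 'I_(2 * k)) : ~~ odd a -> w 0 a < 0 ->
  (forall m : 'I_(2 * k), ~~ odd m -> w 0 a <= w 0 m) ->
  (forall m : 'I_(2 * k), odd m -> 2 * w 0 a <= w 0 m) ->
  in_Iw w a.
Proof.
move=> even_a wa_lt0 a_min_even a_min_odd.
have i_half : a.+1./2 = a./2 by rewrite /= uphalf_half (negbTE even_a).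
have a_double : a%:R = (a./2)%:R * 2 :> R by rewrite -natrM muln2 even_halfK.
exists (a.+1%:R *: unitv R a); split.
  by apply: conv_mem; rewrite /= even_a !inE eqxx orbT.
apply: Init_Ppol_of_min; rewrite ?Ppts_even_unit ?dotv_scale_unitv //.
- by rewrite mulr_ge0_le0 // ltW.
- move=> m odd_m; have := a_min_odd m odd_m.
  rewrite i_half -[a.+1]addn1 natrD a_double.
  have : 0 <= (a./2)%:R :> R by []; nra.
- by move=> m even_m; rewrite ler_wpM2l // a_min_even.
Qed.

End Vertices.

(* With a and b minimising w over the e_{2l-1} and e_{2l} coordinates, compare
   w_b with 2 w_a: the smaller side, if negative, yields a vertex witness;
   otherwise w is nonnegative and the origin is a witness. *)
Theorem mainTheorem4 (R : realType) (k : nat) (hk : (1 <= k)%N)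
  (w : 'rV[R]_(2 * k)) (hw : w != 0) :
  exists j : 'I_(2 * k), exists x : 'rV[R]_(2 * k),
    Qseg j x /\ Init w (@Ppol R k j.+1) x.
Proof.
have two_k_gt1 : (1 < 2 * k)%N by lia.
pose e0 : 'I_(2 * k) := Ordinal (ltnW two_k_gt1).
pose e1 : 'I_(2 * k) := Ordinal two_k_gt1.
have [a even_a a_min] := @exists_argmin R 'I_(2 * k) (fun m => ~~ odd m) (w 0) e0 isT.
have [b odd_b b_min] := @exists_argmin R 'I_(2 * k) (fun m => odd m) (w 0) e1 isT.
have [wb_le|wa_le] := lerP (w 0 b) (2 * w 0 a).
- have [wb_lt0|wb_ge0] := ltP (w 0 b) 0.
    exists b; apply: odd_min_in_Iw => // m even_m.
    by apply: (le_trans wb_le); rewrite ler_pM2l // a_min.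
  exists e0; apply: nonneg_in_Iw => m; case: (boolP (odd m)) => [odd_m|even_m].
    exact: le_trans wb_ge0 (b_min _ odd_m).
  have := a_min _ even_m; lra.
- have [wa_lt0|wa_ge0] := ltP (w 0 a) 0.
    exists a; apply: even_min_in_Iw => // m odd_m.
    exact: le_trans (ltW wa_le) (b_min _ odd_m).
  exists e0; apply: nonneg_in_Iw => m; case: (boolP (odd m)) => [odd_m|even_m].
    have := b_min _ odd_m; lra.
  exact: le_trans wa_ge0 (a_min _ even_m).
Qed.
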